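(* Let $d\ge1$ and $n\ge d+2$ be integers, and let $M$ be a $K_{d+2}$-matroid on $E(K_n)$. Then the rank of $M$ is at most $dn-\binom{d+1}{2}$.
   Context: A $K_{d+2}$-matroid on $E(K_n)$ is a matroid on the edge set of the complete graph $K_n$ in which the edge set of every copy of $K_{d+2}$ in $K_n$ is a circuit. *)

From mathcomp Require Import all_boot.
Set Implicit Arguments. Unset Strict Implicit. Unset Printing Implicit Defensive.

Definition edges_Kn (n : nat) : {set {set 'I_n}} :=
  [set e : {set 'I_n} | #|e| == 2].

Definition is_matroid (T : finType) (E : {set T}) (indep : {set T} -> bool) : Prop :=
  [/\ (forall A : {set T}, indep A -> A \subset E),
      indep set0,
      (forall A B : {set T}, indep B -> A \subset B -> indep A) &
      (forall A B : {set T}, indep A -> indep B -> #|A| < #|B| ->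
         exists2 x, x \in B :\: A & indep (x |: A))].

Definition is_circuit (T : finType) (E : {set T}) (indep : {set T} -> bool)
  (C : {set T}) : Prop :=
  [/\ C \subset E, ~~ indep C & (forall D : {set T}, D \proper C -> indep D)].

Definition clique_edges (n : nat) (S : {set 'I_n}) : {set {set 'I_n}} :=
  [set e in edges_Kn n | e \subset S].

Definition is_Kmatroid (d n : nat) (indep : {set {set 'I_n}} -> bool) : Prop :=
  is_matroid (edges_Kn n) indep /\
  (forall S : {set 'I_n}, #|S| = d.+2 -> is_circuit (edges_Kn n) indep (clique_edges S)).

Definition mrank (T : finType) (indep : {set T} -> bool) : nat :=
  \max_(A : {set T} | indep A) #|A|.

From mathcomp Require Import all_boot zify.
Set Implicit Arguments. Unset Strict Implicit. Unset Printing Implicit Defensive.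

(* Fix a d-set S of vertices. Every edge x avoiding S lies in the copy of
   K_{d+2} on S ∪ x, a circuit all of whose other edges meet S; so the edges
   meeting S span the matroid, and a spanning set bounds the rank. There are
   C(n,2) - C(n-d,2) = dn - C(d+1,2) such edges. *)

Section MatroidSpan.

Variables (T : finType) (E : {set T}) (indep : {set T} -> bool).
Hypothesis indep_matroid : is_matroid E indep.

Lemma maxcard_indep_setU1_dep (F J C : {set T}) (x : T) :
  indep J -> J \subset F ->
  (forall A, indep A -> A \subset F -> #|A| <= #|J|) ->
  is_circuit E indep C -> x \in C -> C :\ x \subset F -> x \notin J ->
  ~~ indep (x |: J).
Proof.
have [_ _ indep_sub indep_aug] := indep_matroid.
move=> indJ JF maxJ [_ depC indC_proper] xC CxF xNJ; apply/negP => indxJ.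
pose P A := [&& indep A, C :\ x \subset A & A \subset F].
have PCx : P (C :\ x) by rewrite /P indC_proper ?properD1 // subxx CxF.
have [K /and3P[indK CxK KF] maxK] := arg_maxnP (fun A : {set T} => #|A|) PCx.
have ltKxJ : #|K| < #|x |: J| by rewrite cardsU1 xNJ ltnS maxJ.
have [y /setDP[yxJ yNK] indyK] := indep_aug _ _ indK indxJ ltKxJ.
have [eq_yx | neq_yx] := eqVneq y x.
  move: depC; rewrite (indep_sub _ (y |: K)) //.
  by rewrite eq_yx -{1}(setD1K xC) setUS.
have yF : y \in F by apply: (subsetP JF); rewrite -(setU1K xNJ) in_setD1 neq_yx.
have /maxK : P (y |: K).
  by rewrite /P indyK (subset_trans CxK (subsetUr _ _)) subUset sub1set yF KF.
by rewrite /= cardsU1 yNK add1n ltnn.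
Qed.

Lemma mrank_le_spanning (F : {set T}) :
  (forall x, x \in E :\: F ->
     exists2 C, is_circuit E indep C & (x \in C) && (C :\ x \subset F)) ->
  mrank indep <= #|F|.
Proof.
have [indep_E indep0 _ indep_aug] := indep_matroid.
move=> spanF; apply/bigmax_leqP => I indI.
pose P A := indep A && (A \subset F).
have P0 : P set0 by rewrite /P indep0 sub0set.
have [J /andP[indJ JF] maxJ] := arg_maxnP (fun A : {set T} => #|A|) P0.
apply: leq_trans (subset_leq_card JF); rewrite leqNgt; apply/negP => ltJI.
have [x /setDP[xI xNJ] indxJ] := indep_aug _ _ indJ indI ltJI.
have maxJF A : indep A -> A \subset F -> #|A| <= #|J|.
  by move=> indA AF; apply: maxJ; rewrite /P indA AF.
have [xF | xNF] := boolP (x \in F).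
  have : #|x |: J| <= #|J| by apply: maxJF; rewrite // subUset sub1set xF.
  by rewrite cardsU1 xNJ add1n ltnn.
have xE : x \in E by apply: (subsetP (indep_E _ indI)).
have /spanF[C circC /andP[xC CxF]] : x \in E :\: F by rewrite inE xNF xE.
by have := maxcard_indep_setU1_dep indJ JF maxJF circC xC CxF xNJ; rewrite indxJ.
Qed.

End MatroidSpan.

Lemma exists_set_card (T : finType) (k : nat) :
  k <= #|T| -> exists S : {set T}, #|S| = k.
Proof.
move=> le_kT.
have : 0 < #|[set S : {set T} | #|S| == k]| by rewrite card_draws bin_gt0.
by case/card_gt0P => S; rewrite inE => /eqP; exists S.
Qed.

Lemma bin2_sub (n d : nat) :
  d <= n -> 'C(n, 2) - 'C(n - d, 2) = d * n - 'C(d.+1, 2).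
Proof.
have bin2D k m : 'C(m + k, 2) + 'C(k.+1, 2) = 'C(m, 2) + k * (m + k).
  elim: k => [|k IH]; first by rewrite addn0.
  by rewrite addnS !binS !bin1 bin0 in IH *; nia.
by move=> /subnK def_n; have := bin2D d (n - d); rewrite def_n; lia.
Qed.

Section CompleteGraph.

Variable n : nat.

Definition edges_meeting (S : {set 'I_n}) : {set {set 'I_n}} :=
  [set e in edges_Kn n | ~~ [disjoint e & S]].

Lemma card_clique_edges (S : {set 'I_n}) : #|clique_edges S| = 'C(#|S|, 2).
Proof.
by rewrite -cards_draws; apply: eq_card => e; rewrite !inE andbC.
Qed.

Lemma card_edges_meeting (S : {set 'I_n}) :
  #|edges_meeting S| = 'C(n, 2) - 'C(n - #|S|, 2).
Proof.
have -> : edges_meeting S = edges_Kn n :\: clique_edges (~: S).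
  apply/setP => e; rewrite !inE disjoints_subset.
  by case: (#|e| == 2); case: (e \subset ~: S).
have clique_sub : clique_edges (~: S) \subset edges_Kn n.
  by apply/subsetP => e; rewrite inE => /andP[].
rewrite cardsD (setIidPr clique_sub) card_clique_edges /edges_Kn card_draws.
by rewrite [#|~: S|]cardsCs setCK card_ord.
Qed.

Lemma edge_avoiding_clique (S x : {set 'I_n}) :
  x \in edges_Kn n :\: edges_meeting S ->
  [/\ #|S :|: x| = #|S| + 2, x \in clique_edges (S :|: x)
    & clique_edges (S :|: x) :\ x \subset edges_meeting S].
Proof.
rewrite inE => /andP[]; rewrite inE => /nandP[/negP // | /negbNE disj_xS] xE.
have x2 : #|x| = 2 by move: xE; rewrite inE => /eqP.
split.
- by rewrite cardsU x2 setIC (disjoint_setI0 disj_xS) cards0 subn0.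
- by rewrite inE xE subsetUr.
apply/subsetP => e; rewrite !inE => /and3P[neq_ex e2 eSx].
rewrite e2 /=; apply: contra neq_ex => disj_eS.
rewrite eqEcard x2 (eqP e2) leqnn andbT; apply/subsetP => i ei.
by move/subsetP/(_ i ei): eSx; rewrite in_setU (disjointFr disj_eS ei).
Qed.

End CompleteGraph.

Theorem lemma4p1 (d n : nat) (indep : {set {set 'I_n}} -> bool) :
  1 <= d -> d + 2 <= n -> @is_Kmatroid d n indep ->
  mrank indep <= d * n - 'C(d.+1, 2).
Proof.
move=> _ le_d2_n [matroid_indep Kd2_circuit].
have [S cardS] : exists S : {set 'I_n}, #|S| = d.
  by apply: exists_set_card; rewrite card_ord; lia.
rewrite -bin2_sub; last by lia.
rewrite -cardS -card_edges_meeting.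
apply: (mrank_le_spanning matroid_indep) => x xNS.
have [cardSx xSx SxS] := edge_avoiding_clique xNS.
exists (clique_edges (S :|: x)); last by rewrite xSx SxS.
by apply: Kd2_circuit; rewrite cardSx cardS addn2.
Qed.
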